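(* Let $\Omega$ be a topological signature and $X$ a topological space such that $X$ and every $\Omega_n$ are 0-dimensional spaces. Then the topological algebra $T_\Omega(X)$ is residually finite. Moreover, the unique continuous homomorphism $T_\Omega(X)\to\overline{\Omega}_X\mathcal{S}t_\Omega$ extending the natural generating mapping $X\to\overline{\Omega}_X\mathcal{S}t_\Omega$ is injective and is a homeomorphism of $T_\Omega(X)$ onto the subalgebra of $\overline{\Omega}_X\mathcal{S}t_\Omega$ (algebraically) generated by the image of $X$.
   Context: A space is 0-dimensional if it is $T_1$ and its clopen subsets form a basis. $T_\Omega(X)$ is the term algebra (absolutely free $\Omega$-algebra) on $X$, whose elements are finite ordered trees with leaves labeled in $X\uplus\Omega_0$ and nodes with $k$ children labeled in $\Omega_k$; it is topologized as the topological sum, over all tree shapes, of the product of the label spaces of the nodes (a net converges to $t$ iff eventually it has the shape of $t$ and the labels at each node converge). It is a topological $\Omega$-algebra, and $X$ embeds as single-node trees. A topological algebra is residually finite if any two distinct elements are separated by a continuous homomorphism into a finite discrete topological $\Omega$-algebra. A Stone topological algebra is a topological $\Omega$-algebra (continuous evaluation maps $\Omega_n\times A^n\to A$) whose space is compact Hausdorff 0-dimensional; $\mathcal{S}t_\Omega$ is the class of all Stone topological $\Omega$-algebras. $\overline{\Omega}_X\mathcal{S}t_\Omega$ is the free Stone topological algebra over $X$: a Stone topological algebra with a continuous map $\iota:X\to\overline{\Omega}_X\mathcal{S}t_\Omega$ whose image generates a dense subalgebra, such that every continuous map from $X$ to a Stone topological $\Omega$-algebra $T$ extends uniquely as $\hat\varphi\circ\iota$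 with $\hat\varphi$ a continuous homomorphism. *)

From HB Require Import structures.
From mathcomp Require Import all_boot.
From mathcomp Require Import boolp classical_sets functions cardinality topology.
Set Implicit Arguments. Unset Strict Implicit. Unset Printing Implicit Defensive.
Local Open Scope classical_set_scope.

Section Terms.
Variables (Omega : nat -> topologicalType) (X : topologicalType).

Inductive term : Type :=
| Var : X -> term
| Op : forall n : nat, Omega n -> {ffun 'I_n -> term} -> term.

Inductive basic_nbhd : term -> set term -> Prop :=
| bn_var (x : X) (U : set X) : open U -> U x ->
    basic_nbhd (Var x) [set t | exists2 y, U y & t = Var y]
| bn_op (n : nat) (o : Omega n) (ts : {ffun 'I_n -> term})
    (V : set (Omega n)) (B : 'I_n -> set term) :
    open V -> V o -> (forall i, basic_nbhd (ts i) (B i)) ->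
    basic_nbhd (Op o ts)
      [set t | exists o' ts', [/\ t = Op o' ts', V o' & forall i, B i (ts' i)]].
End Terms.

Section TermTopology.
Variables (Omega : nat -> topologicalType) (X : topologicalType).
Local Notation T := (term Omega X).

HB.instance Definition _ := gen_eqMixin T.
HB.instance Definition _ := gen_choiceMixin T.

(* The topology of T_Omega(X): the topological sum over tree shapes of the
   products of the label spaces. *)
Definition term_basis : set (set T) := [set B | exists t, basic_nbhd t B].

HB.instance Definition _ :=
  @isSubBaseTopological.Build T (set T) term_basis id.
End TermTopology.

Definition ops (Omega : nat -> Type) (A : Type) :=
  forall n : nat, Omega n -> ('I_n -> A) -> A.

Definition top_alg (Omega : nat -> topologicalType) (A : topologicalType)
    (op : ops Omega A) : Prop :=
  forall n : nat,
    continuous (fun p : Omega n * {ptws 'I_n -> A} => op n p.1 p.2).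

Definition is_hom (Omega : nat -> Type) (A B : Type)
    (opA : ops Omega A) (opB : ops Omega B) (f : A -> B) : Prop :=
  forall n (o : Omega n) (a : 'I_n -> A), f (opA n o a) = opB n o (f \o a).

Definition closed_under (Omega : nat -> Type) (A : Type) (op : ops Omega A)
    (S : set A) : Prop :=
  forall n (o : Omega n) (a : 'I_n -> A), (forall i, S (a i)) -> S (op n o a).

Definition generated_subalg (Omega : nat -> Type) (A : Type) (op : ops Omega A)
    (G : set A) : set A :=
  [set y | forall S : set A, G `<=` S -> closed_under op S -> S y].

Definition zero_dim (T : topologicalType) : Prop :=
  @accessible_space T /\
  forall (x : T) (U : set T), open U -> U x ->
    exists V : set T, [/\ clopen V, V x & V `<=` U].

Definition residually_finite (Omega : nat -> topologicalType)
    (A : topologicalType) (op : ops Omega A) : Prop :=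
  forall a b : A, a <> b ->
    exists (F : topologicalType) (opF : ops Omega F) (h : A -> F),
      [/\ finite_set [set: F], (forall U : set F, open U), top_alg opF &
          [/\ continuous h, is_hom op opF h & h a <> h b]].

Definition stone_alg (Omega : nat -> topologicalType) (A : topologicalType)
    (op : ops Omega A) : Prop :=
  [/\ top_alg op, compact [set: A], @hausdorff_space A & zero_dim A].

Definition free_stone_alg (Omega : nat -> topologicalType) (X : topologicalType)
    (Fr : topologicalType) (opF : ops Omega Fr) (iota : X -> Fr) : Prop :=
  [/\ stone_alg opF, continuous iota,
      dense (generated_subalg opF (range iota)) &
      forall (T : topologicalType) (opT : ops Omega T), stone_alg opT ->
        forall phi : X -> T, continuous phi ->
          exists! hphi : Fr -> T,
            [/\ continuous hphi, is_hom opF opT hphi & phi = hphi \o iota]].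

Definition term_ops (Omega : nat -> topologicalType) (X : topologicalType) :
  ops Omega (term Omega X) := fun n o a => Op o (finfun a).

From mathcomp Require Import all_boot.
From mathcomp Require Import boolp classical_sets functions cardinality topology.
From Stdlib Require Import Eqdep_dec.
Set Implicit Arguments. Unset Strict Implicit. Unset Printing Implicit Defensive.
Local Open Scope classical_set_scope.

(* Every basic neighbourhood of a term t prescribes open sets for the labels
   of the nodes of t; since X and the Omega_n are 0-dimensional these can be
   shrunk to clopen sets, and membership in the resulting neighbourhood is
   then decided by a homomorphism into a finite algebra whose operations are
   locally constant in the operation symbol, i.e. by a continuous
   homomorphism into a finite discrete algebra. Such homomorphisms separate
   terms, which is residual finiteness. A finite discrete algebra is a Stone
   algebra, so each of them factors continuously through the canonical map
   h from terms to the free Stone algebra: hence h is injective, and its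
   inverse on the image of h, the subalgebra generated by X, is continuous. *)

Section LocallyConstant.
Variable A : topologicalType.

Definition locally_constant (B : Type) (f : A -> B) :=
  forall x, \forall y \near x, f y = f x.

Lemma locally_constant_cst (B : Type) (c : B) : locally_constant (fun=> c).
Proof. by move=> x; apply: nearW. Qed.

Lemma locally_constant_pair (B C : Type) (f : A -> B) (g : A -> C) :
  locally_constant f -> locally_constant g -> locally_constant (fun x => (f x, g x)).
Proof. by move=> lf lg x; apply: filterS2 (lf x) (lg x) => y -> ->. Qed.

Lemma locally_constant_continuous (B : choiceType) (f : A -> discrete_topology B) :
  locally_constant f -> continuous f.
Proof.
by move=> lf x N /nbhs_singleton Nfx; apply: filterS (lf x) => y /= ->.
Qed.

Lemma locally_constant_clopen (W : set A) :
  clopen W -> locally_constant (fun x => `[< W x >]).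
Proof.
move=> [oW cW] x; have [Wx|nWx] := pselect (W x).
  by apply: filterS (open_nbhs_nbhs (conj oW Wx)) => y Wy; rewrite !asboolT.
have oWC : open (~` W) by rewrite openC.
by apply: filterS (open_nbhs_nbhs (conj oWC nWx)) => y nWy; rewrite !asboolF.
Qed.
End LocallyConstant.

Lemma zero_dim_separating_clopen (A : topologicalType) (x y : A) :
  zero_dim A -> x != y -> exists W, [/\ clopen W, W x & ~ W y].
Proof.
move=> [A1 clopen_basis] /A1[U [oU]]; rewrite inE in_setC => Ux /negP Uy.
have [W [cW Wx WU]] := clopen_basis x U oU Ux.
by exists W; split=> // /WU; rewrite -inE.
Qed.

Lemma ptws_discrete_set1 (I : finType) (F : discreteTopologicalType)
    (a : {ptws I -> F}) :
  nbhs a [set a].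
Proof.
have near_a i : \forall b \near a, (b : {ptws I -> F}) i = a i.
  exact: (@proj_continuous _ (fun=> F) i a _ (discrete_set1 _)).
by apply: filterS (filter_forall _ near_a) => b /= ba; apply: funext.
Qed.

Lemma ptws_nbhs_box (I : eqType) (A : topologicalType) (f : {ptws I -> A})
    (Q : set {ptws I -> A}) :
  nbhs f Q -> exists2 W : I -> set A, (forall i, nbhs (f i) (W i)) &
    forall g : I -> A, (forall i, W i (g i)) -> Q g.
Proof.
pose box_filter := [set Q : set {ptws I -> A} | exists2 W : I -> set A,
  (forall i, nbhs (f i) (W i)) & forall g : I -> A, (forall i, W i (g i)) -> Q g].
have box_filterF : Filter box_filter.
  split.
  - by exists (fun=> setT) => // i; exact: filterT.
  - move=> P R [W1 W1f W1P] [W2 W2f W2R]; exists (fun i => W1 i `&` W2 i).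
      by move=> i; exact: filterI.
    by move=> g gW; split; [apply: W1P => i; case: (gW i)|apply: W2R => i; case: (gW i)].
  - by move=> P R PR [W Wf WP]; exists W => // g /WP /PR.
suff : cvg_to box_filter (nbhs f) by move=> /(_ Q).
apply/(@cvg_sup _ _ (fun i => Topological.class
  (initial_topology (fun g : (forall i : I, A) => g i))) box_filter f) => i.
move=> W; rewrite (@nbhsE (initial_topology (fun g : (forall i : I, A) => g i))).
move=> -[_ [[C oC <-] Cf] CW].
exists (fun j => if j == i then C else setT) => [j|g gC].
  by case: eqP => [->|_]; [apply: open_nbhs_nbhs|exact: filterT].
by apply: CW; have := gC i; rewrite eqxx.
Qed.

(* Density only provides a default value in [A] when [B] is inhabited. *)
Lemma injective_dense_range_inverse (A : Type) (B : topologicalType) (f : A -> B) :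
  injective f -> dense (range f) -> exists g : B -> A, cancel f g.
Proof.
move=> f_inj f_dense.
have /choice[g gK] : forall y, exists x, (exists x', f x' = y) -> f x = y.
  move=> y; have [[x fxy]|not_in_range] := pselect (exists x, f x = y); first by exists x.
  have [_ [_ [x _ _]]] := f_dense setT (ex_intro _ y I) openT.
  by exists x => /not_in_range.
by exists g => x; apply: f_inj; apply: gK; exists x.
Qed.

Lemma is_hom_comp (Omega : nat -> Type) (A B C : Type) (opA : ops Omega A)
    (opB : ops Omega B) (opC : ops Omega C) (f : A -> B) (g : B -> C) :
  is_hom opA opB f -> is_hom opB opC g -> is_hom opA opC (g \o f).
Proof. by move=> hf hg n o a; rewrite /= hf hg. Qed.

Lemma finite_discrete_stone (Omega : nat -> topologicalType) (F : finType)
    (d : ops Omega (discrete_topology F)) :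
  (forall n (a : 'I_n -> F), locally_constant (fun o : Omega n => d n o a)) ->
  stone_alg d.
Proof.
move=> d_lc; split.
- move=> n; apply: locally_constant_continuous => -[o a].
  exists ([set o' | d n o' a = d n o a], [set a]); last by move=> [o' a'] /= [eo' ->].
  by split; [exact: d_lc|exact: ptws_discrete_set1].
- exact/finite_compact/finite_finset.
- exact: discrete_hausdorff.
split=> [x y xy|x U _ Ux].
  exists [set x]; split; [exact: discrete_open|exact: mem_set|].
  by apply: mem_set => /= yx; move: xy; rewrite yx eqxx.
exists [set x]; split=> [|//|_ -> //].
by split; [exact: discrete_open|exact: discrete_closed].
Qed.

Section Terms.
Variables (Omega : nat -> topologicalType) (X : topologicalType).
Local Notation T := (term Omega X).

Fixpoint term_nested_ind (P : T -> Prop) (PVar : forall x, P (Var Omega x))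
    (POp : forall n (o : Omega n) (ts : {ffun 'I_n -> T}),
      (forall i, P (ts i)) -> P (Op o ts))
    (t : T) : P t :=
  match t with
  | Var x => PVar x
  | Op n o ts => POp n o ts (fun i => term_nested_ind PVar POp (ts i))
  end.

Lemma Op_arity n m (o : Omega n) (o' : Omega m) ts ts' :
  Op (X:=X) o ts = Op o' ts' -> n = m.
Proof. by case. Qed.

Lemma Op_inj n (o o' : Omega n) ts ts' :
  Op (X:=X) o ts = Op o' ts' -> o = o' /\ ts = ts'.
Proof.
have dec : forall k l : nat, {k = l} + {k <> l} := @eq_comparable nat.
case=> eo ets; split; first exact: (inj_pair2_eq_dec _ dec _ _ _ _ eo).
exact: (inj_pair2_eq_dec _ dec _ _ _ _ ets).
Qed.

Definition var_set (U : set X) : set T := [set t | exists2 y, U y & t = Var Omega y].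

Definition op_set n (V : set (Omega n)) (B : 'I_n -> set T) : set T :=
  [set t | exists o ts, [/\ t = Op o ts, V o & forall i, B i (ts i)]].

Lemma op_set_Op n V B (o : Omega n) ts :
  op_set V B (Op o ts) <-> V o /\ forall i, B i (ts i).
Proof.
split=> [[o' [ts' [/Op_inj[-> ->]]]]|[Vo Bts]] //.
by exists o, ts.
Qed.

Lemma op_set_arity n V B m (o : Omega m) ts : op_set (n:=n) V B (Op o ts) -> m = n.
Proof. by case=> o' [ts' [/Op_arity]]. Qed.

Lemma basic_nbhd_at (t : T) B s : basic_nbhd t B -> B s -> basic_nbhd s B.
Proof.
move=> bB; elim: bB s => [x U oU _|n o ts V B' oV _ _ IH] s.
  by case=> y Uy ->; exact: bn_var.
by case=> o' [ts' [-> Vo' B'ts']]; apply: bn_op => // i; exact: IH.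
Qed.

Lemma basic_nbhd_self (t : T) B : basic_nbhd t B -> B t.
Proof.
by elim=> [x U _ Ux|n o ts V B' _ Vo _ IH]; [exists x|apply/op_set_Op].
Qed.

Lemma basic_nbhd_exists (t : T) : exists B, basic_nbhd t B.
Proof.
elim/term_nested_ind: t => [x|n o ts /choice[B bB]].
  by exists (var_set setT); apply: bn_var => //; exact: openT.
by exists (op_set setT B); apply: bn_op => //; exact: openT.
Qed.

Lemma basic_nbhd_inv (t : T) B : basic_nbhd t B ->
  match t with
  | Var x => exists U, [/\ open U, U x & B = var_set U]
  | Op n o ts => exists V Bs, [/\ open V, V o, forall i, basic_nbhd (ts i) (Bs i)
                                & B = op_set V Bs]
  end.
Proof. by case=> [x U|n o ts V Bs] *; [exists U|exists V, Bs]. Qed.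

Lemma basic_nbhdI (t : T) B1 B2 :
  basic_nbhd t B1 -> basic_nbhd t B2 -> basic_nbhd t (B1 `&` B2).
Proof.
move=> b1; elim: b1 B2 => [x U oU Ux|n o ts V B oV Vo _ IH] B2 /basic_nbhd_inv.
  move=> [U' [oU' U'x ->]].
  have -> : var_set U `&` var_set U' = var_set (U `&` U').
    apply/seteqP; split=> [_ [[y Uy ->] [y' U'y' [e]]]|_ [y [Uy U'y] ->]].
      by exists y => //; split; rewrite // e.
    by split; exists y.
  by apply: bn_var => //; exact: openI.
move=> [V' [B' [oV' V'o bB' ->]]].
have -> : op_set V B `&` op_set V' B' = op_set (V `&` V') (fun i => B i `&` B' i).
  apply/seteqP; split=> [_ [[o1 [ts1 [-> Vo1 Bts1]]] /op_set_Op[V'o1 B'ts1]]|].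
    by apply/op_set_Op.
  move=> _ [o1 [ts1 [-> [Vo1 V'o1] Bts1]]].
  by split; apply/op_set_Op; split=> // i; case: (Bts1 i).
by apply: bn_op => //; [exact: openI | move=> i; exact: IH].
Qed.

Lemma basic_nbhd_open (t : T) B : basic_nbhd t B -> open B.
Proof.
move=> bB; exists [set B]; last exact: bigcup_set1.
by move=> _ ->; apply: finI_from1; exists t.
Qed.

Lemma nbhs_termP (t : T) (N : set T) :
  nbhs t N <-> exists2 B, basic_nbhd t B & B `<=` N.
Proof.
split=> [|[B bB BN]]; last first.
  apply: filterS BN _; apply: open_nbhs_nbhs; split; first exact: basic_nbhd_open bB.
  exact: basic_nbhd_self.
pose basic_filter := [set M | exists2 B, basic_nbhd t B & B `<=` M].
have basic_filterF : Filter basic_filter.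
  split.
  - by have [B bB] := basic_nbhd_exists t; exists B.
  - move=> P Q [B1 b1 B1P] [B2 b2 B2Q]; exists (B1 `&` B2); first exact: basic_nbhdI.
    by move=> s [/B1P ? /B2Q ?].
  - by move=> P Q PQ [B bB BP]; exists B => // s /BP /PQ.
rewrite nbhsE => -[_ [[D Dsub <-] [C DC Ct]] DN].
have [E Esub CE] := Dsub _ DC.
suff [B bB BC] : basic_filter C by exists B => // s /BC Cs; apply: DN; exists C.
rewrite -CE; apply: filter_bigI => A EA.
have [t' bA] : term_basis A by have := Esub _ EA; rewrite inE.
exists A => //; apply: basic_nbhd_at bA _.
by move: Ct; rewrite -CE; exact.
Qed.

Lemma nbhs_Var (x : X) U : nbhs x U -> nbhs (Var Omega x) (var_set U).
Proof.
rewrite nbhsE => -[U' [oU' U'x] U'U]; apply/nbhs_termP.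
exists (var_set U'); first exact: bn_var.
by move=> _ [y /U'U Uy ->]; exists y.
Qed.

Lemma nbhs_Op n (o : Omega n) (ts : {ffun 'I_n -> T}) V B :
  nbhs o V -> (forall i, nbhs (ts i) (B i)) -> nbhs (Op o ts) (op_set V B).
Proof.
rewrite nbhsE => -[V' [oV' V'o] V'V] nB.
have /choice[B' bB'] : forall i, exists B', basic_nbhd (ts i) B' /\ B' `<=` B i.
  by move=> i; have /nbhs_termP[B' ? ?] := nB i; exists B'.
apply/nbhs_termP; exists (op_set V' B'); first by apply: bn_op => // i; case: (bB' i).
move=> _ [o' [ts' [-> /V'V Vo' B'ts']]]; apply/op_set_Op; split=> // i.
exact: (bB' i).2.
Qed.

Lemma hom_Op (F : Type) (d : ops Omega F) (phi : T -> F) :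
  is_hom (@term_ops Omega X) d phi ->
  forall n (o : Omega n) ts, phi (Op o ts) = d n o (fun i => phi (ts i)).
Proof.
by move=> hphi n o ts; rewrite -[ts]ffunK -[Op _ _]/(term_ops o ts) hphi ffunK.
Qed.

Lemma term_hom_eq (A : Type) (opA : ops Omega A) (g1 g2 : T -> A) :
  is_hom (@term_ops Omega X) opA g1 -> is_hom (@term_ops Omega X) opA g2 ->
  g1 \o @Var Omega X = g2 \o @Var Omega X -> g1 = g2.
Proof.
move=> hg1 hg2 eVar; apply: funext; elim/term_nested_ind => [x|n o ts IH].
  exact: (congr1 (fun f => f x) eVar).
by rewrite (hom_Op hg1) (hom_Op hg2); congr opA; apply: funext.
Qed.
End Terms.

Section Recognizable.
Variables (Omega : nat -> topologicalType) (X : topologicalType).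
Local Notation T := (term Omega X).

(* Equivalently, a continuous homomorphism into a finite discrete topological
   algebra: see [finite_discrete_stone] and [finite_hom_locally_constant]. *)
Record finite_hom := FiniteHom {
  fh_alg : finType;
  fh_ops : ops Omega fh_alg;
  fh_map :> T -> fh_alg;
  fh_is_hom : is_hom (@term_ops Omega X) fh_ops fh_map;
  fh_ops_lc : forall n (a : 'I_n -> fh_alg),
    locally_constant (fun o : Omega n => fh_ops o a);
  fh_var_lc : locally_constant (fh_map \o @Var Omega X) }.

Definition saturated (F : Type) (phi : T -> F) (B : set T) :=
  forall s s', phi s = phi s' -> B s -> B s'.

Definition recognizable (B : set T) := exists phi : finite_hom, saturated phi B.

Lemma recognizable_setT : recognizable setT.
Proof.
have hom : is_hom (@term_ops Omega X) (fun _ _ _ => tt) (fun=> tt) by [].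
by exists (FiniteHom hom (fun n a => locally_constant_cst tt) (locally_constant_cst tt)).
Qed.

Lemma recognizable_family n (B : 'I_n -> set T) : (forall i, recognizable (B i)) ->
  exists phi : finite_hom, forall i, saturated phi (B i).
Proof.
move=> /choice[phis sat].
pose F := {dffun forall i, fh_alg (phis i)}.
pose d : ops Omega F := fun m o a => [ffun i => @fh_ops (phis i) m o (fun j => a j i)].
pose phi (t : T) : F := [ffun i => phis i t].
have hom : is_hom (@term_ops Omega X) d phi.
  move=> m o a; apply/ffunP => i; rewrite !ffunE fh_is_hom.
  by congr fh_ops; apply: funext => j; rewrite /= ffunE.
have ops_lc m (a : 'I_m -> F) : locally_constant (fun o : Omega m => d m o a).
  move=> o; apply: filterS
    (filter_forall _ (fun i => fh_ops_lc (f:=phis i) (fun j => a j i) o)) => o' eo'.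
  by apply/ffunP => i; rewrite !ffunE eo'.
have var_lc : locally_constant (phi \o @Var Omega X).
  move=> x; apply: filterS (filter_forall _ (fun i => fh_var_lc (phis i) x)) => y ey.
  by apply/ffunP => i; rewrite !ffunE [LHS]ey.
exists (FiniteHom hom ops_lc var_lc) => i s s' /(congr1 (fun f : F => f i)).
by rewrite /= !ffunE; exact: sat.
Qed.

Lemma recognizable_var_set (W : set X) : clopen W -> recognizable (var_set W).
Proof.
move=> cW; pose phi (t : T) := if t is Var y then `[< W y >] else false.
have hom : is_hom (@term_ops Omega X) (fun _ _ _ => false) phi by [].
have var_lc : locally_constant (phi \o @Var Omega X) := locally_constant_clopen cW.
exists (FiniteHom hom (fun n a => locally_constant_cst false) var_lc).
move=> s s' e [y Wy sy]; move: e; rewrite sy /= asboolT //.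
by case: s' => [z|//] /esym/asboolP Wz; exists z.
Qed.

Lemma locally_constant_op_set_Op n (W : set (Omega n)) B m (ts : {ffun 'I_m -> T}) :
  clopen W -> locally_constant (fun o : Omega m => `[< op_set W B (Op o ts) >]).
Proof.
move=> cW; have [emn|nmn] := eqVneq m n; last first.
  suff -> : (fun o : Omega m => `[< op_set W B (Op o ts) >]) = fun=> false.
    exact: locally_constant_cst.
  by apply: funext => o; apply/asboolF => /op_set_arity/eqP; apply/negP.
subst m; have [Bts|nBts] := pselect (forall i, B i (ts i)).
  suff -> : (fun o => `[< op_set W B (Op o ts) >]) = fun o => `[< W o >].
    exact: locally_constant_clopen.
  by apply: funext => o; apply: asbool_equiv_eq; rewrite op_set_Op; tauto.
suff -> : (fun o => `[< op_set W B (Op o ts) >]) = fun=> false.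
  exact: locally_constant_cst.
by apply: funext => o; apply/asboolF => /op_set_Op[].
Qed.

Lemma recognizable_op_set n (W : set (Omega n)) (B : 'I_n -> set T) :
  clopen W -> (forall i, recognizable (B i)) -> recognizable (op_set W B).
Proof.
move=> cW /recognizable_family[phi sat].
pose R := op_set W B.
have R_congr m (o : Omega m) (ts ts' : {ffun 'I_m -> T}) :
    (forall i, phi (ts i) = phi (ts' i)) -> R (Op o ts) -> R (Op o ts').
  move=> e Rts; have emn := op_set_arity Rts; subst m.
  move: Rts => /op_set_Op[Wo Bts]; apply/op_set_Op; split=> // i.
  exact: sat (e i) (Bts i).
pose reach m (o : Omega m) (b : 'I_m -> fh_alg phi) :=
  exists ts : {ffun 'I_m -> T}, (forall i, phi (ts i) = b i) /\ R (Op o ts).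
have reach_phi m (o : Omega m) (a : 'I_m -> T) :
    reach m o (fun i => phi (a i)) <-> R (Op o (finfun a)).
  split=> [[ts [e Rts]]|Ra]; last by exists (finfun a); split=> // i; rewrite ffunE.
  by apply: R_congr Rts => i; rewrite e ffunE.
(* The flag of [d m o a] tells whether arguments with values [a] under [phi]
   build a term of [R]; by [R_congr] it does not depend on the choice of
   these arguments. *)
pose d : ops Omega (fh_alg phi * bool) := fun m o a =>
  (fh_ops o (fun i => (a i).1), `[< reach m o (fun i => (a i).1) >]).
pose psi (t : T) := (phi t, `[< R t >]).
have hom : is_hom (@term_ops Omega X) d psi.
  move=> m o a; rewrite /psi /d /= fh_is_hom; congr pair.
  exact/esym/asbool_equiv_eq/reach_phi.
have ops_lc m (a : 'I_m -> fh_alg phi * bool) : locally_constant (fun o => d m o a).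
  apply: locally_constant_pair; first exact: fh_ops_lc.
  have [[ts0 e0]|none] :=
    pselect (exists ts : {ffun 'I_m -> T}, forall i, phi (ts i) = (a i).1).
    suff -> : (fun o => `[< reach m o (fun i => (a i).1) >]) =
              fun o => `[< R (Op o ts0) >] by exact: locally_constant_op_set_Op.
    apply: funext => o; apply: asbool_equiv_eq.
    split=> [[ts [e Rts]]|R0]; last by exists ts0.
    by apply: R_congr Rts => i; rewrite e e0.
  suff -> : (fun o => `[< reach m o (fun i => (a i).1) >]) = fun=> false.
    exact: locally_constant_cst.
  by apply: funext => o; apply/asboolF => -[ts [e _]]; apply: none; exists ts.
have var_lc : locally_constant (psi \o @Var Omega X).
  suff -> : psi \o @Var Omega X = fun x => ((phi \o @Var Omega X) x, false).
    exact: locally_constant_pair (fh_var_lc phi) (locally_constant_cst false).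
  by apply: funext => x; rewrite /psi /= asboolF // => -[? [? []]].
exists (FiniteHom hom ops_lc var_lc) => s s' [_ e] Rs.
by apply/asboolP; rewrite -e asboolT.
Qed.

Lemma recognizable_op_head n (W : set (Omega n)) :
  clopen W -> recognizable (op_set W (fun=> setT)).
Proof. by move=> cW; apply: recognizable_op_set cW (fun=> recognizable_setT). Qed.

Lemma finite_hom_locally_constant (phi : finite_hom) : locally_constant phi.
Proof.
elim/term_nested_ind => [x|n o ts IH].
  by apply: filterS (nbhs_Var Omega (fh_var_lc phi x)) => _ [y /= phi_y ->].
apply: filterS (nbhs_Op (fh_ops_lc (fun i => phi (ts i)) o) IH).
move=> _ [o' [ts' [-> /= eo' ets']]].
rewrite !(hom_Op (fh_is_hom phi)) -eo'.
by congr fh_ops; apply: funext => i; rewrite ets'.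
Qed.
End Recognizable.

Section ZeroDimensional.
Variables (Omega : nat -> topologicalType) (X : topologicalType).
Hypotheses (X0 : zero_dim X) (Omega0 : forall n, zero_dim (Omega n)).
Local Notation T := (term Omega X).

Lemma basic_nbhd_recognizable (t : T) B : basic_nbhd t B ->
  exists R, [/\ recognizable R, R t & R `<=` B].
Proof.
elim=> [x U oU Ux|n o ts V Bs oV Vo _ /choice[R HR]].
  have [W [cW Wx WU]] := X0.2 x U oU Ux.
  exists (var_set W); split; [exact: recognizable_var_set|by exists x|].
  by move=> _ [y /WU Uy ->]; exists y.
have [W [cW Wo WV]] := (Omega0 n).2 o V oV Vo.
exists (op_set W R); split.
- by apply: recognizable_op_set => // i; case: (HR i).
- by apply/op_set_Op; split=> // i; case: (HR i).
- move=> _ [o' [ts' [-> /WV Vo' Rts']]]; apply/op_set_Op; split=> // i.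
  by case: (HR i) => _ _; apply.
Qed.

Lemma recognizable_separates (a b : T) : a <> b ->
  exists R, [/\ recognizable R, R a & ~ R b].
Proof.
elim/term_nested_ind: a b => [x|n o ts IH] [y|m o' ts'] ab.
- have /(zero_dim_separating_clopen X0)[W [cW Wx Wy]] : x != y.
    by apply/eqP => xy; apply: ab; rewrite xy.
  exists (var_set W); split; [exact: recognizable_var_set|by exists x|].
  by case=> z Wz [yz]; apply: Wy; rewrite yz.
- exists (var_set setT); split; [exact: recognizable_var_set clopenT|by exists x|by case].
- exists (op_set (n:=n) setT (fun=> setT)); split; last by case=> ? [? []].
    exact: recognizable_op_head clopenT.
  exact/op_set_Op.
have [mn|nm] := eqVneq m n; last first.
  exists (op_set (n:=n) setT (fun=> setT)); split.
  - exact: recognizable_op_head clopenT.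
  - exact/op_set_Op.
  - by move/op_set_arity/eqP; apply/negP.
subst m; have [oo'|] := eqVneq o o'; last first.
  move=> /(zero_dim_separating_clopen (Omega0 n))[W [cW Wo Wo']].
  exists (op_set W (fun=> setT)); split.
  - exact: recognizable_op_head.
  - exact/op_set_Op.
  - by case/op_set_Op.
subst o'; have [i tsi] : exists i, ts i <> ts' i.
  apply: contrapT => /forallNP ts_ts'; apply: ab; congr Op.
  by apply/ffunP => i; exact: contrapT.
have [Ri [rRi Ri_ts Ri_ts']] := IH i _ tsi.
pose R j := if j == i then Ri else setT.
exists (op_set setT R); split.
- apply: recognizable_op_set clopenT _ => j; rewrite /R; case: eqP => // _.
  exact: recognizable_setT.
- by apply/op_set_Op; split=> // j; rewrite /R; case: eqP => // ->.
- by case/op_set_Op => _ /(_ i); rewrite /R eqxx.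
Qed.

Lemma finite_hom_separates (a b : T) : a <> b ->
  exists phi : finite_hom Omega X, phi a <> phi b.
Proof.
move=> /recognizable_separates[R [[phi sat] Ra nRb]].
by exists phi => ab; exact/nRb/(sat _ _ ab).
Qed.

Lemma finite_hom_fiber_nbhs (t : T) N : nbhs t N ->
  exists phi : finite_hom Omega X, forall s, phi s = phi t -> N s.
Proof.
move=> /nbhs_termP[B /basic_nbhd_recognizable[R [[phi sat] Rt RB]] BN].
by exists phi => s st; apply/BN/RB; exact: sat (esym st) Rt.
Qed.

Lemma term_residually_finite : residually_finite (@term_ops Omega X).
Proof.
move=> a b /finite_hom_separates[phi ab].
have [top _ _ _] := finite_discrete_stone (fh_ops_lc (f:=phi)).
exists (discrete_topology (fh_alg phi)), (fh_ops (f:=phi)), phi; split=> //.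
- exact: finite_finset.
- exact: discrete_open.
split=> //; last exact: fh_is_hom.
exact/locally_constant_continuous/finite_hom_locally_constant.
Qed.
End ZeroDimensional.

Section TermEval.
Variables (Omega : nat -> topologicalType) (X : topologicalType).
Variables (A : Type) (opA : ops Omega A) (v : X -> A).
Local Notation T := (term Omega X).

Fixpoint term_eval (t : T) : A :=
  match t with
  | Var x => v x
  | Op n o ts => opA o (fun i => term_eval (ts i))
  end.

Lemma term_eval_hom : is_hom (@term_ops Omega X) opA term_eval.
Proof. by move=> n o a; congr opA; apply: funext => i /=; rewrite ffunE. Qed.

Lemma term_eval_image : range term_eval = generated_subalg opA (range v).
Proof.
apply/seteqP; split=> [_ [t _ <-] S vS S_closed|y].
  elim/term_nested_ind: t => [x|n o ts IH]; [by apply: vS; exists x|exact: S_closed].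
apply; first by move=> _ [x _ <-]; exists (Var Omega x).
move=> n o a a_range.
have /choice[ts tsE] : forall i, exists t, term_eval t = a i.
  by move=> i; have [t _ <-] := a_range i; exists t.
exists (Op o (finfun ts)) => //=.
by congr opA; apply: funext => i; rewrite ffunE.
Qed.
End TermEval.

Lemma term_eval_continuous (Omega : nat -> topologicalType) (X A : topologicalType)
    (opA : ops Omega A) (v : X -> A) :
  top_alg opA -> continuous v -> continuous (term_eval opA v).
Proof.
move=> opA_cont v_cont; elim/term_nested_ind => [x|n o ts IH] N; rewrite nbhs_simpl.
  move=> /v_cont Nv; apply: filterS (nbhs_Var Omega Nv) => _ [y Ny ->]; exact: Ny.
move=> /(opA_cont n (o, fun i => term_eval opA v (ts i))) [[P Q] [/= Po Qts] PQN].
have [W Wts WQ] := ptws_nbhs_box Qts.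
apply: filterS (nbhs_Op Po (fun i => IH i _ (Wts i))) => _ [o' [ts' [-> Po' Wts']]].
by apply: (PQN (o', fun i => term_eval opA v (ts' i))); split=> //; exact: WQ.
Qed.

Section FreeStone.
Variables (Omega : nat -> topologicalType) (X : topologicalType).
Hypotheses (X0 : zero_dim X) (Omega0 : forall n, zero_dim (Omega n)).
Variables (Fr : topologicalType) (opF : ops Omega Fr) (iota : X -> Fr).
Hypothesis free : free_stone_alg opF iota.
Local Notation h := (term_eval opF iota).

Lemma finite_hom_factors (phi : finite_hom Omega X) :
  exists2 hp : Fr -> discrete_topology (fh_alg phi),
    continuous hp & forall t, hp (h t) = phi t.
Proof.
have [_ _ _ univ] := free.
have [hp [[hp_cont hp_hom hp_iota] _]] :=
  univ _ _ (finite_discrete_stone (fh_ops_lc (f:=phi)))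
    _ (locally_constant_continuous (fh_var_lc phi)).
exists hp => // t; suff -> : (phi : term Omega X -> _) = hp \o h by [].
apply: term_hom_eq (fh_is_hom phi) (is_hom_comp (term_eval_hom _ _) hp_hom) _.
by rewrite hp_iota.
Qed.

Lemma term_eval_free_injective : injective h.
Proof.
move=> a b hab; apply: contrapT => /(finite_hom_separates X0 Omega0)[phi ab]; apply: ab.
by have [hp _ hpE] := finite_hom_factors phi; rewrite -!hpE hab.
Qed.

Lemma term_eval_free_inverse_continuous (g : Fr -> term Omega X) :
  cancel h g -> {within range h, continuous g}.
Proof.
move=> hK; apply/subspace_continuousP => _ [t _ <-] N.
rewrite /from_subspace /= hK => /(finite_hom_fiber_nbhs X0 Omega0)[phi phiN].
have [hp hp_cont hpE] := finite_hom_factors phi.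
change (within (range h) (nbhs (h t)) (g @^-1` N)).
have near_t : nbhs (h t) (hp @^-1` [set hp (h t)]) := hp_cont (h t) _ (discrete_set1 _).
rewrite /within; apply: filterS near_t => y /= hp_eq [s _ sy]; subst y.
by rewrite hK; apply: phiN; rewrite -!hpE.
Qed.
End FreeStone.

Unset Implicit Arguments.
Theorem proposition4p7 (Omega : nat -> topologicalType) (X : topologicalType) :
  zero_dim X -> (forall n : nat, zero_dim (Omega n)) ->
  residually_finite (@term_ops Omega X) /\
  forall (Fr : topologicalType) (opF : ops Omega Fr) (iota : X -> Fr),
    free_stone_alg opF iota ->
    exists h : term Omega X -> Fr,
      [/\ [/\ continuous h, is_hom (@term_ops Omega X) opF h
            & h \o @Var Omega X = iota],
          (forall h' : term Omega X -> Fr,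
              continuous h' -> is_hom (@term_ops Omega X) opF h' ->
              h' \o @Var Omega X = iota -> h' = h),
          injective h,
          h @` setT = generated_subalg opF (range iota) &
          exists g : Fr -> term Omega X,
            (forall t, g (h t) = t) /\
            {within generated_subalg opF (range iota), continuous g}].
Proof.
move=> X0 Omega0; split; first exact: term_residually_finite.
move=> Fr opF iota free; have [[opF_cont _ _ _] iota_cont sub_dense _] := free.
pose h := term_eval opF iota.
have h_inj : injective h := term_eval_free_injective X0 Omega0 free.
have [|g hK] := injective_dense_range_inverse h_inj; first by rewrite term_eval_image.
exists h; split.
- by split; [exact: term_eval_continuous|exact: term_eval_hom|].
- by move=> h' _ h'_hom h'_iota; apply: term_hom_eq h'_hom (term_eval_hom _ _) _.
- exact: h_inj.
- exact: term_eval_image.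
- exists g; split=> //; rewrite -term_eval_image.
  exact: term_eval_free_inverse_continuous.
Qed.
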